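(* Consider the infinite-width limit ($N\to\infty$) of a two-layer linear network in the $\mu$P/mean-field parameterization with feature-learning strength $\gamma_0$ (as described in the context), trained by gradient flow on the MSE loss, with one data point per task: task $\mathcal{T}_1$ has input $\mathbf{x}_1$, task $\mathcal{T}_2$ has input $\mathbf{x}_2$, with $K^x_{11}=K^x_{22}=1$, $K^x_{12}=\rho\in[0,1]$, and both tasks have the same target $y$, and the initial residuals are $\Delta_1(0)=\Delta_2(0)=y$. Train on $\mathcal{T}_1$ only, for time $t$. Writing $\Delta_2(t)=\Delta_2^{(0)}(t)+\gamma_0\Delta_2^{(1)}(t)+\gamma_0^2\Delta_2^{(2)}(t)+O(\gamma_0^3)$, one has $\Delta_2^{(1)}\equiv 0$, $\lim_{t\to\infty}\Delta_2^{(0)}(t)=y(1-\rho)$ and $\lim_{t\to\infty}\Delta_2^{(2)}(t)=0$. Consequently the loss on task $\mathcal{T}_2$ after infinitely long training on $\mathcal{T}_1$ is $\frac{y^2}{2}(1-\rho)^2+O(\gamma_0^3)$, independent of $\gamma_0$ up to second order.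
   Context: Network: $f(\mathbf{x})=\frac{1}{\gamma_0N}\mathbf{w}\cdot\mathbf{h}(\mathbf{x})$, $\mathbf{h}(\mathbf{x})=D^{-1/2}\mathbf{W}^0\mathbf{x}$, weights initialized i.i.d. $\mathcal{N}(0,1)$, learning rate $\gamma_0^2N$. $K^x_{ij}=\frac1D\mathbf{x}_i\cdot\mathbf{x}_j$. Residual $\Delta_i=y-f(\mathbf{x}_i)$; in the infinite-width limit, during training on task $\mathcal{T}_1$, $\frac{d}{dt}\Delta_i=-K_{i1}(t)\Delta_1$ where $K_{ij}=\Phi_{ij}+G\,K^x_{ij}$ with limiting kernels $\Phi_{ij}=\mathbb{E}[h_ih_j]$, $G=\mathbb{E}[z^2]$ computed from the single-site process $h_i(t)=\chi_i+\gamma_0\int_0^t\Delta_1(s)z(s)K^x_{i1}ds$, $z(t)=\xi+\gamma_0\int_0^t\Delta_1(s)h_1(s)ds$, where $(\chi_1,\chi_2)$ is centered Gaussian with covariance $K^x$ and $\xi\sim\mathcal{N}(0,1)$ independent. The expansion is in powers of $\gamma_0$ with $\gamma_0$-independent coefficients. The loss on task $\mathcal{T}_2$ is $\frac12\Delta_2^2$. *)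

From HB Require Import structures.
From mathcomp Require Import all_boot all_order all_algebra.
From mathcomp Require Import all_classical all_reals all_analysis.
From mathcomp Require Import normal_distribution.
Set Implicit Arguments. Unset Strict Implicit. Unset Printing Implicit Defensive.
Import Order.TTheory GRing.Theory Num.Theory.
Import numFieldNormedType.Exports.
Local Open Scope classical_set_scope.
Local Open Scope ring_scope.

Definition centered_normal_law {R : realType} {d} {T : measurableType d}
  (P : probability T R) (Y : T -> R) (v : R) : Prop :=
  if 0 < v then
    forall A : set R, measurable A ->
      P (Y @^-1` A) = normal_prob 0 (Num.sqrt v) A
  else P [set w | Y w = 0] = 1%E.

(* (chi1, chi2, xi) is a centered Gaussian vector with covariance matrix
     [[1, rho, 0], [rho, 1, 0], [0, 0, 1]],
   i.e. (chi1, chi2) ~ N(0, K^x) with K^x_11 = K^x_22 = 1, K^x_12 = rho,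
   and xi ~ N(0,1) independent of (chi1, chi2).  Definition of a Gaussian
   vector: every linear combination is (possibly degenerate) centered normal
   with the variance prescribed by the covariance matrix. *)
Definition init_gaussian {R : realType} {d} {T : measurableType d}
  (P : probability T R) (rho : R) (chi1 chi2 xi : T -> R) : Prop :=
  [/\ measurable_fun setT chi1, measurable_fun setT chi2,
      measurable_fun setT xi &
      forall a b c : R,
        centered_normal_law P (fun w => a * chi1 w + b * chi2 w + c * xi w)
          (a ^+ 2 + b ^+ 2 + c ^+ 2 + 2 * a * b * rho)].

(* Real-valued expectation (used only together with integrability). *)
Definition Exp {R : realType} {d} {T : measurableType d}
  (P : probability T R) (X : T -> R) : R := fine ('E_P[X])%E.

Definition tint {R : realType} (f : R -> R) (t : R) : R :=
  \int[lebesgue_measure]_(s in `[0, t]) f s.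

Definition tintegrable {R : realType} (f : R -> R) (t : R) : Prop :=
  lebesgue_measure.-integrable `[0, t] (EFin \o f).

(* The infinite-width (single-site / DMFT) dynamics during training on T1,
   for a fixed feature-learning strength g0 (= gamma_0), with
   K^x_11 = K^x_22 = 1, K^x_21 = K^x_12 = rho, initial residuals y.
     h_i(t) = chi_i + g0 \int_0^t D1(s) z(s) K^x_{i1} ds,
     z(t)   = xi    + g0 \int_0^t D1(s) h_1(s) ds,
     Phi_ij(t) = E[h_i(t) h_j(t)],  G(t) = E[z(t)^2],
     K_ij = Phi_ij + G K^x_ij,
     d/dt D_i(t) = - K_i1(t) D_1(t),  D_i(0) = y.                             *)
Definition dmft_solution {R : realType} {d} {T : measurableType d}
  (P : probability T R) (rho y g0 : R) (chi1 chi2 xi : T -> R)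
  (D1 D2 : R -> R) (h1 h2 z : R -> T -> R) : Prop :=
  let Phi11 := fun t => Exp P (fun w => h1 t w * h1 t w) in
  let Phi21 := fun t => Exp P (fun w => h2 t w * h1 t w) in
  let G := fun t => Exp P (fun w => z t w ^+ 2) in
  let K11 := fun t => Phi11 t + G t * 1 in
  let K21 := fun t => Phi21 t + G t * rho in
  [/\
      (forall (t : R) (w : T), 0 <= t ->
        [/\ tintegrable (fun s => D1 s * z s w * 1) t,
            tintegrable (fun s => D1 s * z s w * rho) t &
            tintegrable (fun s => D1 s * h1 s w) t] /\
        [/\ h1 t w = chi1 w + g0 * tint (fun s => D1 s * z s w * 1) t,
            h2 t w = chi2 w + g0 * tint (fun s => D1 s * z s w * rho) t &
            z t w = xi w + g0 * tint (fun s => D1 s * h1 s w) t]),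
      (forall t : R, 0 <= t ->
        [/\ P.-integrable setT (EFin \o (fun w => h1 t w * h1 t w)),
            P.-integrable setT (EFin \o (fun w => h2 t w * h1 t w)) &
            P.-integrable setT (EFin \o (fun w => z t w ^+ 2))]),
      (forall t : R, 0 < t ->
        is_derive t 1 D1 (- (K11 t * D1 t)) /\
        is_derive t 1 D2 (- (K21 t * D1 t))),
      (D1 0 = y /\ D2 0 = y) &
      (D1 t @[t --> 0^'+] --> y) /\ (D2 t @[t --> 0^'+] --> y)].

Definition bigO3_0 {R : realType} (f : R -> R) : Prop :=
  exists C delta : R, 0 < delta /\
    forall g, 0 < g < delta -> `|f g| <= C * g ^+ 3.

(* Along the solution the single-site fields stay linear in the initial
   Gaussians: with U = gamma_0 \int_0^t Delta_1, one has
   h1 +- z = (chi1 +- xi) e^(+-U) and h2 - rho h1 = chi2 - rho chi1.  Hence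
   K11 = mu (e^(2U) + e^(-2U)) >= 2 mu and K21 = rho K11, where mu = E[chi1^2] > 0,
   so Delta_2 - rho Delta_1 is conserved and |Delta_1(t)| <= |y| e^(-2 mu t).
   The first integral Delta_1 + mu / (2 gamma_0) (e^(2U) - e^(-2U)) = y bounds
   K11 - 2 mu by O(gamma_0^2), whence
   Delta_1(t) = y e^(-2 mu t) + O(gamma_0^2 t e^(-2 mu t)) uniformly in gamma_0.
   Matching this against the expansion in gamma_0 forces Delta_2^(1) = 0 and
   Delta_2^(0)(t) = (1 - rho) y + rho y e^(-2 mu t), and bounds Delta_2^(2)(t)
   by O(t e^(-2 mu t)). *)

From HB Require Import structures.
From mathcomp Require Import all_boot all_order all_algebra.
From mathcomp Require Import all_classical all_reals all_analysis.
From mathcomp Require Import normal_distribution measurable_realfun.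
From mathcomp Require Import ring lra.
Set Implicit Arguments. Unset Strict Implicit. Unset Printing Implicit Defensive.
Import Order.TTheory GRing.Theory Num.Theory.
Import numFieldNormedType.Exports.
Local Open Scope classical_set_scope.
Local Open Scope ring_scope.


Section GaussianMoments.
Variables (R : realType) (d : measure_display) (T : measurableType d).
Variables (P : probability T R) (rho : R) (chi1 chi2 xi : T -> R).
Hypothesis rho01 : 0 <= rho <= 1.
Hypothesis gaussP : init_gaussian P rho chi1 chi2 xi.

Definition lincomb (a b c : R) (w : T) : R := a * chi1 w + b * chi2 w + c * xi w.

Definition lincomb_var (a b c : R) : R := a ^+ 2 + b ^+ 2 + c ^+ 2 + 2 * a * b * rho.

Definition lincomb_cov (a1 b1 c1 a2 b2 c2 : R) : R :=
  a1 * a2 + b1 * b2 + c1 * c2 + (a1 * b2 + b1 * a2) * rho.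

Definition lincomb_sqmoment (a b c : R) : \bar R :=
  (\int[P]_w ((lincomb a b c w) ^+ 2)%:E)%E.

Definition chi1_msq : R := fine (\int[P]_w (chi1 w ^+ 2)%:E)%E.

Lemma measurable_lincomb a b c : measurable_fun setT (lincomb a b c).
Proof.
case: gaussP => m1 m2 m3 _; rewrite /lincomb.
by apply: measurable_funD; [apply: measurable_funD|];
  apply: measurable_funM => //; exact: measurable_cst.
Qed.

Lemma measurable_lincomb_sqr a b c :
  measurable_fun setT (fun w => ((lincomb a b c w) ^+ 2)%:E).
Proof. by apply/measurable_EFinP; apply: measurable_funX; exact: measurable_lincomb. Qed.

Lemma lincomb_var_ge0 a b c : 0 <= lincomb_var a b c.
Proof.
case/andP: rho01 => r0 r1.
have -> : lincomb_var a b c =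
    (1 - rho) * (a ^+ 2 + b ^+ 2) + rho * (a + b) ^+ 2 + c ^+ 2.
  by rewrite /lincomb_var; ring.
apply: addr_ge0; last exact: sqr_ge0.
by apply: addr_ge0; apply: mulr_ge0; rewrite ?subr_ge0 ?sqr_ge0 ?addr_ge0 ?sqr_ge0.
Qed.

Lemma lincomb_law_var1 a b c A : lincomb_var a b c = 1 -> measurable A ->
  P (lincomb a b c @^-1` A) = normal_prob 0 1 A.
Proof.
move=> var1 mA; case: gaussP => _ _ _ /(_ a b c).
by rewrite /centered_normal_law -/(lincomb_var a b c) var1 ltr01 sqrtr1 => /(_ A mA).
Qed.

Lemma measurable_lincomb_eq0 a b c : measurable [set w | lincomb a b c w = 0].
Proof.
rewrite -[X in measurable X]setTI.
exact: (measurable_lincomb a b c measurableT (measurable_set1 0)).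
Qed.

Lemma lincomb_var1_eq0_null a b c : lincomb_var a b c = 1 ->
  P [set w | lincomb a b c w = 0] = 0%E.
Proof.
move=> var1; rewrite -[X in P X]/(lincomb a b c @^-1` [set 0]).
rewrite (lincomb_law_var1 var1 (measurable_set1 0)).
have null0 : (@lebesgue_measure R).-null_set [set (0:R)].
  move=> A mA A0; apply/eqP; rewrite eq_le measure_ge0 andbT.
  by rewrite -(lebesgue_measure_set1 (0:R)) le_measure // inE.
exact: (normal_prob_dominates 0 1 null0).
Qed.

Lemma lincomb_sqmoment_var1 a b c : lincomb_var a b c = 1 ->
  lincomb_sqmoment a b c = lincomb_sqmoment 1 0 0.
Proof.
have sqr_ge0E : {in setT, forall y : R, (0 <= (y ^+ 2)%:E)%E}.
  by move=> y _; rewrite lee_fin sqr_ge0.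
have msqr : measurable_fun setT (fun y : R => (y ^+ 2)%:E).
  by apply/measurable_EFinP; exact: exprn_measurable.
have pushE a' b' c' : lincomb_sqmoment a' b' c' =
    (\int[pushforward P (lincomb a' b' c')]_(y in setT) (y ^+ 2)%:E)%E.
  rewrite (ge0_integral_pushforward (measurable_lincomb a' b' c') _
    measurableT msqr sqr_ge0E).
  by rewrite preimage_setT.
move=> var1; rewrite !pushE.
apply: (eq_measure_integral (pushforward P (lincomb 1 0 0)));
  [exact: measurable_lincomb|exact: measurable_lincomb|].
move=> _ _ B mB _ /=; rewrite /pushforward !lincomb_law_var1 //.
by rewrite /lincomb_var; ring.
Qed.

Section SecondMoments.
Hypothesis chi1_sqr_integrable :
  P.-integrable setT (EFin \o (fun w => chi1 w * chi1 w)).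

Lemma lincomb_sqmoment_chi1 : lincomb_sqmoment 1 0 0 = chi1_msq%:E.
Proof.
have -> : lincomb_sqmoment 1 0 0 = (\int[P]_w (chi1 w ^+ 2)%:E)%E.
  by apply: eq_integral => w _; rewrite /lincomb mul1r !mul0r !addr0.
rewrite /chi1_msq fineK //.
under eq_integral do rewrite expr2.
exact: integrable_fin_num chi1_sqr_integrable.
Qed.

Lemma lincomb_sqmomentE a b c :
  lincomb_sqmoment a b c = (lincomb_var a b c * chi1_msq)%:E.
Proof.
have [var_gt0|var_le0] := ltrP 0 (lincomb_var a b c).
  set s := Num.sqrt (lincomb_var a b c).
  have s_gt0 : 0 < s by rewrite sqrtr_gt0.
  have s2 : s ^+ 2 = lincomb_var a b c by rewrite sqr_sqrtr // ltW.
  have var1 : lincomb_var (a / s) (b / s) (c / s) = 1.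
    have -> : lincomb_var (a / s) (b / s) (c / s) = lincomb_var a b c / s ^+ 2.
      by rewrite /lincomb_var; field; rewrite lt0r_neq0.
    by rewrite s2 divff // lt0r_neq0.
  have scaleE w : ((lincomb a b c w) ^+ 2)%:E =
      ((s ^+ 2)%:E * ((lincomb (a / s) (b / s) (c / s) w) ^+ 2)%:E)%E.
    by rewrite -EFinM; congr EFin; rewrite /lincomb; field; rewrite lt0r_neq0.
  rewrite /lincomb_sqmoment; under eq_integral => w _ do rewrite scaleE.
  rewrite ge0_integralZl_EFin //; first last.
  - by rewrite sqr_ge0.
  - exact: measurable_lincomb_sqr.
  - by move=> x _; rewrite lee_fin sqr_ge0.
  by rewrite -/(lincomb_sqmoment _ _ _) lincomb_sqmoment_var1 //
    lincomb_sqmoment_chi1 -EFinM s2.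
have var0 : lincomb_var a b c = 0.
  by apply/eqP; rewrite eq_le var_le0 lincomb_var_ge0.
have law0 : P [set w | lincomb a b c w = 0] = 1%E.
  case: gaussP => _ _ _ /(_ a b c).
  by rewrite /centered_normal_law -/(lincomb_var a b c) var0 ltxx.
have mZ := measurable_lincomb_eq0 a b c.
rewrite var0 mul0r /lincomb_sqmoment (ae_eq_integral (cst 0%E)) //.
- by rewrite integral0.
- exact: measurable_lincomb_sqr.
- exists (~` [set w | lincomb a b c w = 0]); split.
  + exact: measurableC.
  + by have := probability_setC P mZ; rewrite law0 subee.
  + by move=> w /= nz; apply: contra_not nz => -> _; rewrite expr0n.
Qed.

Lemma integrable_lincomb_sqr a b c :
  P.-integrable setT (EFin \o (fun w => lincomb a b c w ^+ 2)).
Proof.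
apply/integrableP; split; first exact: measurable_lincomb_sqr.
rewrite (eq_integral (fun w => ((lincomb a b c w) ^+ 2)%:E)); last first.
  by move=> w _ /=; rewrite ger0_norm // sqr_ge0.
by rewrite -/(lincomb_sqmoment a b c) lincomb_sqmomentE ltry.
Qed.

Lemma Exp_lincomb_sqr a b c :
  Exp P (fun w => lincomb a b c w ^+ 2) = lincomb_var a b c * chi1_msq.
Proof. by rewrite /Exp unlock -/(lincomb_sqmoment a b c) lincomb_sqmomentE. Qed.

Lemma Exp_lincombM a1 b1 c1 a2 b2 c2 :
  Exp P (fun w => lincomb a1 b1 c1 w * lincomb a2 b2 c2 w) =
  lincomb_cov a1 b1 c1 a2 b2 c2 * chi1_msq.
Proof.
pose S w := lincomb (a1 + a2) (b1 + b2) (c1 + c2) w ^+ 2.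
pose D w := lincomb (a1 - a2) (b1 - b2) (c1 - c2) w ^+ 2.
have polarize w : ((lincomb a1 b1 c1 w * lincomb a2 b2 c2 w)%:E =
    (4^-1)%:E * ((S w)%:E - (D w)%:E))%E.
  by rewrite -EFinB -EFinM; congr EFin; rewrite /S /D /lincomb; field.
rewrite /Exp unlock; under eq_integral => w _ do rewrite polarize.
have [iS iD] := (integrable_lincomb_sqr (a1 + a2) (b1 + b2) (c1 + c2),
                 integrable_lincomb_sqr (a1 - a2) (b1 - b2) (c1 - c2)).
rewrite integralZl //; last exact: integrableB.
rewrite integralB_EFin // -!/(lincomb_sqmoment _ _ _) !lincomb_sqmomentE.
by rewrite -EFinB -EFinM /= /lincomb_var /lincomb_cov; field.
Qed.

Lemma chi1_msq_gt0 : 0 < chi1_msq.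
Proof.
have msq_ge0 : 0 <= chi1_msq.
  by rewrite fine_ge0 //; apply: integral_ge0 => w _; rewrite lee_fin sqr_ge0.
rewrite lt_def msq_ge0 andbT; apply/eqP => msq0.
have abs0 : (\int[P]_(w in setT) `|((lincomb 1 0 0 w) ^+ 2)%:E|)%E = 0%E.
  have <- : lincomb_sqmoment 1 0 0 = 0%E by rewrite lincomb_sqmoment_chi1 msq0.
  by apply: eq_integral => w _ /=; rewrite ger0_norm // sqr_ge0.
have [N [mN PN0 sN]] :=
  (ae_eq_integral_abs P measurableT (measurable_lincomb_sqr 1 0 0)).1 abs0.
have PZ : P [set w | lincomb 1 0 0 w = 0] = 0%E.
  by apply: lincomb_var1_eq0_null; rewrite /lincomb_var; ring.
have mZ := measurable_lincomb_eq0 1 0 0.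
have : (P setT <= P N + P [set w | (lincomb 1 0 0 w = 0)%R])%E.
  apply: le_trans (measureU2 _ _ _) => //.
  apply: le_measure; rewrite ?inE //; first exact: measurableU.
  move=> w _; have [|nz] := eqVneq (lincomb 1 0 0 w) (0 : R); [by right|left].
  by apply: sN => /= /(_ I) /eqP; rewrite eqe sqrf_eq0; apply/negP.
by rewrite PN0 PZ adde0 probability_setT lee_fin ler10.
Qed.

End SecondMoments.
End GaussianMoments.

Section HalfLine.
Variable R : realType.
Implicit Types (F G f : R -> R) (c g t x : R).

Definition cont_halfline F := {within `[0, +oo[, continuous F}.

Lemma cont_halfline_at F x : cont_halfline F -> 0 < x -> {for x, continuous F}.
Proof.
move=> /continuous_within_itvcyP[cF _] x0; apply: cF.
by rewrite in_itv /= x0.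
Qed.

Lemma cont_halfline_at0 F : cont_halfline F -> F t @[t --> 0^'+] --> F 0.
Proof. by move=> /continuous_within_itvcyP[]. Qed.

Lemma cont_halflineP F : (forall x, 0 < x -> {for x, continuous F}) ->
  F t @[t --> 0^'+] --> F 0 -> cont_halfline F.
Proof.
move=> cF cF0; apply/continuous_within_itvcyP; split => // x.
by rewrite in_itv /= andbT; exact: cF.
Qed.

Lemma eq_cont_halfline F G : (forall t, 0 <= t -> F t = G t) ->
  cont_halfline F -> cont_halfline G.
Proof.
move=> eFG cF; apply: cont_halflineP.
  move=> x x0; rewrite /prop_for /continuous_at -(eFG x (ltW x0)).
  apply: cvg_trans (cont_halfline_at cF x0); apply: near_eq_cvg.
  by apply: filterS (lt_nbhsr x0) => t t0; rewrite eFG // ltW.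
rewrite -(eFG 0 (lexx 0)); apply: cvg_trans (cont_halfline_at0 cF).
apply: near_eq_cvg; near=> t.
have t0 : 0 < t by near: t; exact: nbhs_right_gt.
by rewrite eFG // ltW.
Unshelve. all: by end_near. Qed.

Lemma derivable_cont_halfline F : (forall x, 0 < x -> derivable F x 1) ->
  F t @[t --> 0^'+] --> F 0 -> cont_halfline F.
Proof.
move=> dF cF0; apply: cont_halflineP => // x x0.
by apply/differentiable_continuous; rewrite -derivable1_diffP; exact: dF.
Qed.

Lemma cont_halflineD F G : cont_halfline F -> cont_halfline G ->
  cont_halfline (fun t => F t + G t).
Proof. by move=> cF cG x; apply: cvgD; [exact: cF|exact: cG]. Qed.

Lemma cont_halflineN F : cont_halfline F -> cont_halfline (fun t => - F t).
Proof. by move=> cF x; apply: cvgN; exact: cF. Qed.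

Lemma cont_halflineB F G : cont_halfline F -> cont_halfline G ->
  cont_halfline (fun t => F t - G t).
Proof. by move=> cF cG; apply: cont_halflineD => //; exact: cont_halflineN. Qed.

Lemma cont_halflineM F G : cont_halfline F -> cont_halfline G ->
  cont_halfline (fun t => F t * G t).
Proof. by move=> cF cG x; apply: cvgM; [exact: cF|exact: cG]. Qed.

Lemma cont_halfline_cst c : cont_halfline (fun _ => c).
Proof. by move=> x; exact: cvg_cst. Qed.

Lemma cont_halflineZ c F : cont_halfline F -> cont_halfline (fun t => c * F t).
Proof. exact/cont_halflineM/cont_halfline_cst. Qed.

Lemma cont_halfline_expR F : cont_halfline F -> cont_halfline (fun t => expR (F t)).
Proof. by move=> cF x; apply: (continuous_comp (cF x)); exact: continuous_expR. Qed.

Lemma cont_halfline_expRZ c : cont_halfline (fun t => expR (c * t)).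
Proof.
by apply/cont_halfline_expR/cont_halflineZ; apply: continuous_subspaceT => x.
Qed.

Lemma cont_halfline_segment F t :
  cont_halfline F -> {within `[0, t], continuous F}.
Proof.
by apply: continuous_subspaceW => s /=; rewrite !in_itv /= => /andP[-> _].
Qed.

Lemma tintegrable_cont F u : cont_halfline F -> 0 <= u -> tintegrable F u.
Proof.
move=> cF u0; apply: continuous_compact_integrable; first exact: segment_compact.
exact: cont_halfline_segment.
Qed.

Lemma tint0 f : tint f 0 = 0.
Proof. by rewrite /tint set_itv1 Rintegral_set1. Qed.

Lemma cont_halfline_tint f : (forall u, 0 <= u -> tintegrable f u) ->
  cont_halfline (tint f).
Proof.
move=> intf; apply: cont_halflineP.
  move=> x x0; have x1 : 0 <= x + 1 by rewrite ltW ?addr_gt0.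
  apply: (within_continuous_continuous _
    (parameterized_integral_continuous x1 (intf _ x1))).
    by rewrite addr_gt0.
  by rewrite in_itv /= x0 ltrDl ltr01.
have /(continuous_within_itvP _ ltr01)[_ + _] :=
  parameterized_integral_continuous ler01 (intf _ ler01).
by [].
Qed.

Lemma is_derive_tint f x : 0 < x -> (forall u, 0 <= u -> tintegrable f u) ->
  {for x, continuous f} -> is_derive x 1 (tint f) (f x).
Proof.
move=> x0 intf cf; have xx1 : x < x + 1 by rewrite ltrDl ltr01.
have [dF eF] := continuous_FTC1_closed xx1 (intf _ (ltW (addr_gt0 x0 ltr01))) x0 cf.
by apply: DeriveDef; rewrite // -derive1E.
Qed.

Section IntegralEquation.
Variables (F f : R -> R) (c g : R).
Hypothesis intf : forall u, 0 <= u -> tintegrable f u.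
Hypothesis Feq : forall t, 0 <= t -> F t = c + g * tint f t.

Lemma integral_eqn_at0 : F 0 = c.
Proof. by rewrite Feq // tint0 mulr0 addr0. Qed.

Lemma integral_eqn_cont : cont_halfline F.
Proof.
apply: (eq_cont_halfline (F := fun t => c + g * tint f t)) => [t t0|].
  by rewrite Feq.
exact/cont_halflineD/cont_halflineZ/cont_halfline_tint/intf/cont_halfline_cst.
Qed.

Lemma integral_eqn_derive x : 0 < x -> {for x, continuous f} ->
  is_derive x 1 F (g * f x).
Proof.
move=> x0 cf; apply: (near_eq_is_derive (f := fun t => c + g * tint f t)).
  by apply: filterS (lt_nbhsr x0) => t t0; rewrite Feq // ltW.
apply: is_derive_eq; first exact: is_deriveD (is_deriveZ g (is_derive_tint x0 intf cf)).
by rewrite add0r.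
Qed.

End IntegralEquation.

Lemma is_derive_expR_comp F x dF : is_derive x 1 F dF ->
  is_derive x 1 (fun t => expR (F t)) (expR (F x) * dF).
Proof.
move=> [dFx FxE].
have dexpF : derivable (expR \o F) x 1.
  apply/derivable1_diffP; apply: differentiable_comp.
    by apply/derivable1_diffP.
  by apply/derivable1_diffP; exact: derivable_expR.
have dexp : derivable expR (F x) 1 by exact: derivable_expR.
apply: DeriveDef => //.
rewrite -derive1E (derive1_comp dFx dexp) !derive1E FxE.
by have [_ ->] := is_derive_expR (F x).
Qed.

Lemma MVT_halfline F dF t : 0 <= t -> cont_halfline F ->
  (forall x, 0 < x -> is_derive x 1 F (dF x)) ->
  exists2 c, 0 <= c & F t - F 0 = dF c * t.
Proof.
move=> t0 cF dFP.
have dFP' x : x \in `]0, t[ -> is_derive x 1 F (dF x).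
  by rewrite in_itv /= => /andP[x0 _]; exact: dFP.
have [c ct ->] := MVT_segment t0 dFP' (cont_halfline_segment cF).
exists c; last by rewrite subr0.
by move: ct; rewrite in_itv /= => /andP[].
Qed.

Lemma derive0_cst_halfline F t : 0 <= t -> cont_halfline F ->
  (forall x, 0 < x -> is_derive x 1 F 0) -> F t = F 0.
Proof.
move=> t0 cF dF0; have [c _] := MVT_halfline (dF := fun _ => 0) t0 cF dF0.
by move/eqP; rewrite mul0r subr_eq0 => /eqP.
Qed.

End HalfLine.

Section SmallParameter.
Variable R : realType.

Lemma le0_of_le_small (x K del : R) : 0 < del ->
  (forall g, 0 < g -> g < del -> x <= g * K) -> x <= 0.
Proof.
move=> del0 xle; rewrite leNgt; apply/negP => x0.
have K1 : 0 < `|K| + 1 by have := normr_ge0 K; lra.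
pose g := Num.min (del / 2) (x / (2 * (`|K| + 1))).
have g_half : g <= del / 2 by rewrite ge_min lexx.
have g_del : g < del by lra.
have g0 : 0 < g by rewrite lt_min !divr_gt0 // mulr_gt0.
have g_x : g * (2 * (`|K| + 1)) <= x.
  by rewrite -ler_pdivlMr ?mulr_gt0 // ge_min lexx orbT.
have gK : g * K <= g * `|K| by apply: ler_wpM2l; [exact: ltW|exact: ler_norm].
by have := xle g g0 g_del; nra.
Qed.

Lemma ler_exprSM_norm (g x : R) (n : nat) : 0 < g -> g <= 1 ->
  g ^+ n.+1 * x <= g * `|x|.
Proof.
move=> g0 g1; apply: le_trans (_ : g ^+ n.+1 * `|x| <= _).
  by apply: ler_wpM2l; [rewrite exprn_ge0 // ltW|exact: ler_norm].
apply: ler_wpM2r => //.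
by rewrite exprS ler_piMr ?exprn_ile1 // ?exprn_ge0 // ltW.
Qed.

(* The coefficients of [a + g b + g^2 c = O(g^2)] as [g -> 0+] are read off
   one power of [g] at a time, each time dividing by [g]. *)
Lemma quadratic_coefs (a b c M C del : R) : 0 < del ->
  (forall g, 0 < g -> g < del ->
     `|a + g * b + g ^+ 2 * c| <= g ^+ 2 * M + C * g ^+ 3) ->
  [/\ a = 0, b = 0 & `|c| <= M].
Proof.
move=> del0 bound.
pose del1 := Num.min del 1; have del10 : 0 < del1 by rewrite lt_min del0 ltr01.
have small (g : R) : 0 < g -> g < del1 ->
    `|a + g * b + g ^+ 2 * c| <= g ^+ 2 * M + g ^+ 3 * C /\ g <= 1.
  move=> g0; rewrite lt_min => /andP[gd /ltW g1].
  by rewrite [_ * C]mulrC; split => //; exact: bound.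
have normM (g x : R) : 0 < g -> `|g * x| = g * `|x|.
  by move=> g0; rewrite normrM ger0_norm // ltW.
have a0 : a = 0.
  apply/normr0_eq0/le_anti; rewrite normr_ge0 andbT.
  apply: (le0_of_le_small (K := `|M| + `|C| + `|b| + `|c|) del10) => g g0 gd.
  have [le_abc g1] := small g g0 gd.
  have := ler_normB (a + g * b + g ^+ 2 * c) (g * b + g ^+ 2 * c).
  have := ler_normD (g * b) (g ^+ 2 * c).
  rewrite !normM ?exprn_gt0 // (_ : a + g * b + g ^+ 2 * c -
    (g * b + g ^+ 2 * c) = a); last by ring.
  have := ler_exprSM_norm M 1 g0 g1; have := ler_exprSM_norm C 2 g0 g1.
  have := ler_exprSM_norm `|c| 1 g0 g1; rewrite normr_id.
  by lra.
have b0 : b = 0.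
  apply/normr0_eq0/le_anti; rewrite normr_ge0 andbT.
  apply: (le0_of_le_small (K := `|M| + `|C| + `|c|) del10) => g g0 gd.
  have [+ g1] := small g g0 gd; rewrite a0 add0r.
  have -> : g * b + g ^+ 2 * c = g * (b + g * c) by ring.
  have -> : g ^+ 2 * M + g ^+ 3 * C = g * (g ^+ 1 * M + g ^+ 2 * C) by ring.
  rewrite normM // ler_pM2l // => le_bc.
  have := ler_normB (b + g * c) (g * c).
  rewrite normM // (_ : b + g * c - g * c = b); last by ring.
  have := ler_exprSM_norm M 0 g0 g1; have := ler_exprSM_norm C 1 g0 g1.
  by lra.
split => //; rewrite -subr_le0.
apply: (le0_of_le_small (K := C) del10) => g g0 gd.
have [+ g1] := small g g0 gd.
have -> : g ^+ 2 * M + g ^+ 3 * C = g ^+ 2 * (M + g * C) by ring.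
rewrite a0 b0 mulr0 !add0r normM ?ler_pM2l ?exprn_gt0 //.
by lra.
Qed.

End SmallParameter.

Section ExponentialDecay.
Variable R : realType.

Lemma cvg_mul_t_expRN (a K : R) : 0 < a ->
  (K * t * expR (- (a * t))) @[t --> +oo] --> (0 : R).
Proof.
move=> a0; apply/cvgrPdist_le => e e0; near=> t.
have t1 : 1 <= t by near: t; apply: nbhs_pinfty_ge; exact: num_real.
have tB : 2 * `|K| / (e * a ^+ 2) <= t.
  by near: t; apply: nbhs_pinfty_ge; exact: num_real.
have t0 : 0 <= t by apply: le_trans t1.
have ea2 : 0 < e * a ^+ 2 by rewrite mulr_gt0 ?exprn_gt0.
have Kt : 2 * `|K| <= t * (e * a ^+ 2) by rewrite -ler_pdivrMr.
have expR_ge : 1 + (a * t) ^+ 2 / 2 <= expR (a * t).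
  have := @expR_ge1Dxn R (a * t) 1 (mulr_ge0 (ltW a0) t0).
  by rewrite /= (_ : (2`!)%:R = 2 :> R).
rewrite sub0r normrN !normrM (ger0_norm (expR_ge0 _)) (ger0_norm t0).
rewrite expRN ler_pdivrMr ?expR_gt0 //.
have := ler_wpM2l (ltW e0) expR_ge; have := ler_wpM2r t0 Kt.
have [nK aK] := (normr_ge0 K, expR_gt0 (a * t)).
by nra.
Unshelve. all: by end_near. Qed.

Lemma cvg_expRN (a : R) : 0 < a -> expR (- (a * t)) @[t --> +oo] --> (0 : R).
Proof.
move=> a0; apply: (squeeze_cvgr (f := fun _ => 0) (h := fun t => 1 * t * expR (- (a * t)))).
- near=> t.
  have t1 : 1 <= t by near: t; apply: nbhs_pinfty_ge; exact: num_real.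
  by rewrite expR_ge0 /= mul1r ler_peMl // expR_ge0.
- exact: cvg_cst.
- exact: cvg_mul_t_expRN.
Unshelve. all: by end_near. Qed.

Lemma eq_cvg_pinfty (F G : R -> R) (l : R) : (forall t, 0 <= t -> F t = G t) ->
  G t @[t --> +oo] --> l -> F t @[t --> +oo] --> l.
Proof.
move=> eFG; apply: cvg_trans; apply: near_eq_cvg; near=> t.
have t0 : 0 <= t by near: t; apply: nbhs_pinfty_ge; exact: num_real.
by rewrite eFG.
Unshelve. all: by end_near. Qed.

Lemma cvg_pinfty_norm_le (F B : R -> R) : (forall t, 0 <= t -> `|F t| <= B t) ->
  B t @[t --> +oo] --> (0 : R) -> F t @[t --> +oo] --> (0 : R).
Proof.
move=> FB B0; apply: (squeeze_cvgr (f := fun t => - B t) (h := B)) => //.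
- near=> t; have t0 : 0 <= t by near: t; apply: nbhs_pinfty_ge; exact: num_real.
  by rewrite -ler_norml FB.
- by rewrite -oppr0; exact: cvgN.
Unshelve. all: by end_near. Qed.

End ExponentialDecay.

Section Dynamics.
Variables (R : realType) (d : measure_display) (T : measurableType d).
Variables (P : probability T R) (rho y g : R) (chi1 chi2 xi : T -> R).
Variables (D1 D2 : R -> R) (h1 h2 z : R -> T -> R).
Hypothesis rho01 : 0 <= rho <= 1.
Hypothesis gaussP : init_gaussian P rho chi1 chi2 xi.
Hypothesis g_gt0 : 0 < g.
Hypothesis dmftP : dmft_solution P rho y g chi1 chi2 xi D1 D2 h1 h2 z.

Local Notation lincomb := (lincomb chi1 chi2 xi).

Lemma h1_drift_integrable w u : 0 <= u -> tintegrable (fun s => D1 s * z s w * 1) u.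
Proof. by case: dmftP => path _ _ _ _ u0; have [[]] := path u w u0. Qed.

Lemma h2_drift_integrable w u : 0 <= u -> tintegrable (fun s => D1 s * z s w * rho) u.
Proof. by case: dmftP => path _ _ _ _ u0; have [[]] := path u w u0. Qed.

Lemma z_drift_integrable w u : 0 <= u -> tintegrable (fun s => D1 s * h1 s w) u.
Proof. by case: dmftP => path _ _ _ _ u0; have [[]] := path u w u0. Qed.

Lemma h1_eqn w t : 0 <= t -> h1 t w = chi1 w + g * tint (fun s => D1 s * z s w * 1) t.
Proof. by case: dmftP => path _ _ _ _ t0; have [_ []] := path t w t0. Qed.

Lemma h2_eqn w t : 0 <= t -> h2 t w = chi2 w + g * tint (fun s => D1 s * z s w * rho) t.
Proof. by case: dmftP => path _ _ _ _ t0; have [_ []] := path t w t0. Qed.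

Lemma z_eqn w t : 0 <= t -> z t w = xi w + g * tint (fun s => D1 s * h1 s w) t.
Proof. by case: dmftP => path _ _ _ _ t0; have [_ []] := path t w t0. Qed.

Lemma dmft_derive (t : R) : 0 < t ->
  is_derive t 1 D1 (- ((Exp P (fun w => h1 t w * h1 t w) +
                        Exp P (fun w => z t w ^+ 2) * 1) * D1 t)) /\
  is_derive t 1 D2 (- ((Exp P (fun w => h2 t w * h1 t w) +
                        Exp P (fun w => z t w ^+ 2) * rho) * D1 t)).
Proof. by case: dmftP => _ _ + _ _; apply. Qed.

Lemma D1_at0 : D1 0 = y. Proof. by case: dmftP => _ _ _ []. Qed.
Lemma D2_at0 : D2 0 = y. Proof. by case: dmftP => _ _ _ []. Qed.

Lemma chi1_sqr_integrable : P.-integrable setT (EFin \o (fun w => chi1 w * chi1 w)).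
Proof.
case: dmftP => _ /(_ 0 (lexx 0)) [+ _ _] _ _ _.
congr (_.-integrable _ (EFin \o _)); apply/funext => w.
by rewrite (integral_eqn_at0 (h1_eqn w)).
Qed.

Lemma cont_D1 : cont_halfline D1.
Proof.
apply: derivable_cont_halfline => [x x0|].
  by have [[]] := dmft_derive x0.
by rewrite D1_at0; case: dmftP => _ _ _ _ [].
Qed.

Lemma cont_D2 : cont_halfline D2.
Proof.
apply: derivable_cont_halfline => [x x0|].
  by have [_ []] := dmft_derive x0.
by rewrite D2_at0; case: dmftP => _ _ _ _ [].
Qed.

Lemma cont_h1 w : cont_halfline (h1^~ w).
Proof. exact: integral_eqn_cont (h1_drift_integrable w) (h1_eqn w). Qed.

Lemma cont_h2 w : cont_halfline (h2^~ w).
Proof. exact: integral_eqn_cont (h2_drift_integrable w) (h2_eqn w). Qed.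

Lemma cont_z w : cont_halfline (z^~ w).
Proof. exact: integral_eqn_cont (z_drift_integrable w) (z_eqn w). Qed.

Lemma is_derive_h1 w (x : R) : 0 < x ->
  is_derive x 1 (h1^~ w) (g * (D1 x * z x w * 1)).
Proof.
move=> x0; apply: (integral_eqn_derive (h1_drift_integrable w) (h1_eqn w) x0).
apply: (cont_halfline_at _ x0).
apply: cont_halflineM; last exact: cont_halfline_cst.
by apply: cont_halflineM; [exact: cont_D1|exact: cont_z].
Qed.

Lemma is_derive_h2 w (x : R) : 0 < x ->
  is_derive x 1 (h2^~ w) (g * (D1 x * z x w * rho)).
Proof.
move=> x0; apply: (integral_eqn_derive (h2_drift_integrable w) (h2_eqn w) x0).
apply: (cont_halfline_at _ x0).
apply: cont_halflineM; last exact: cont_halfline_cst.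
by apply: cont_halflineM; [exact: cont_D1|exact: cont_z].
Qed.

Lemma is_derive_z w (x : R) : 0 < x -> is_derive x 1 (z^~ w) (g * (D1 x * h1 x w)).
Proof.
move=> x0; apply: (integral_eqn_derive (z_drift_integrable w) (z_eqn w) x0).
apply: (cont_halfline_at _ x0).
by apply: cont_halflineM; [exact: cont_D1|exact: cont_h1].
Qed.

Definition drive t := g * tint D1 t.

Lemma drive0 : drive 0 = 0.
Proof. by rewrite /drive tint0 mulr0. Qed.

Lemma cont_drive : cont_halfline drive.
Proof.
apply: cont_halflineZ; apply: cont_halfline_tint => u u0.
exact: tintegrable_cont cont_D1 u0.
Qed.

Lemma is_derive_drive (x : R) : 0 < x -> is_derive x 1 drive (g * D1 x).
Proof.
move=> x0; apply: is_deriveZ; apply: is_derive_tint x0 _ (cont_halfline_at cont_D1 x0).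
by move=> u u0; exact: tintegrable_cont cont_D1 u0.
Qed.

Lemma h1_at0 w : h1 0 w = chi1 w.
Proof. exact: integral_eqn_at0 (h1_eqn w). Qed.

Lemma h2_at0 w : h2 0 w = chi2 w.
Proof. exact: integral_eqn_at0 (h2_eqn w). Qed.

Lemma z_at0 w : z 0 w = xi w.
Proof. exact: integral_eqn_at0 (z_eqn w). Qed.

(* [h1 + z] and [h1 - z] solve [u' = +- g D1 u]. *)
Lemma h1_add_z w (t : R) : 0 <= t -> h1 t w + z t w = (chi1 w + xi w) * expR (drive t).
Proof.
move=> t0; pose F s := (h1 s w + z s w) * expR (- drive s).
have cF : cont_halfline F.
  apply: cont_halflineM; first by apply: cont_halflineD; [exact: cont_h1|exact: cont_z].
  by apply/cont_halfline_expR/cont_halflineN; exact: cont_drive.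
have F'0 (x : R) : 0 < x -> is_derive x 1 F 0.
  move=> x0; apply: is_derive_eq.
    apply: is_deriveM; first by apply: is_deriveD; [exact: is_derive_h1|exact: is_derive_z].
    by apply/is_derive_expR_comp/is_deriveN; exact: is_derive_drive.
  by rewrite /GRing.scale /=; ring.
have := derive0_cst_halfline t0 cF F'0.
rewrite /F h1_at0 z_at0 drive0 oppr0 expR0 mulr1 => <-.
by rewrite -mulrA -expRD addNr expR0 mulr1.
Qed.

Lemma h1_sub_z w (t : R) : 0 <= t -> h1 t w - z t w = (chi1 w - xi w) * expR (- drive t).
Proof.
move=> t0; pose F s := (h1 s w - z s w) * expR (drive s).
have cF : cont_halfline F.
  apply: cont_halflineM; first by apply: cont_halflineB; [exact: cont_h1|exact: cont_z].
  by apply/cont_halfline_expR; exact: cont_drive.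
have F'0 (x : R) : 0 < x -> is_derive x 1 F 0.
  move=> x0; apply: is_derive_eq.
    apply: is_deriveM; first by apply: is_deriveB; [exact: is_derive_h1|exact: is_derive_z].
    by apply/is_derive_expR_comp; exact: is_derive_drive.
  by rewrite /GRing.scale /=; ring.
have := derive0_cst_halfline t0 cF F'0.
rewrite /F h1_at0 z_at0 drive0 expR0 mulr1 => <-.
by rewrite -mulrA -expRD subrr expR0 mulr1.
Qed.

Lemma h2_sub_rho_h1 w (t : R) : 0 <= t -> h2 t w - rho * h1 t w = chi2 w - rho * chi1 w.
Proof.
move=> t0; pose F s := h2 s w - rho * h1 s w.
have cF : cont_halfline F.
  by apply: cont_halflineB; [exact: cont_h2|apply: cont_halflineZ; exact: cont_h1].
have F'0 (x : R) : 0 < x -> is_derive x 1 F 0.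
  move=> x0; apply: is_derive_eq.
    by apply: is_deriveB; [exact: is_derive_h2|apply: is_deriveZ; exact: is_derive_h1].
  by rewrite /GRing.scale /=; ring.
by have := derive0_cst_halfline t0 cF F'0; rewrite /F h1_at0 h2_at0.
Qed.

Definition cosh_drive t := (expR (drive t) + expR (- drive t)) / 2.
Definition sinh_drive t := (expR (drive t) - expR (- drive t)) / 2.

Lemma h1_lincomb (t : R) : 0 <= t -> h1 t = lincomb (cosh_drive t) 0 (sinh_drive t).
Proof.
move=> t0; apply/funext => w.
have -> : h1 t w = ((h1 t w + z t w) + (h1 t w - z t w)) / 2 by field.
by rewrite h1_add_z // h1_sub_z // /lincomb /cosh_drive /sinh_drive; field.
Qed.

Lemma z_lincomb (t : R) : 0 <= t -> z t = lincomb (sinh_drive t) 0 (cosh_drive t).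
Proof.
move=> t0; apply/funext => w.
have -> : z t w = ((h1 t w + z t w) - (h1 t w - z t w)) / 2 by field.
by rewrite h1_add_z // h1_sub_z // /lincomb /cosh_drive /sinh_drive; field.
Qed.

Lemma h2_lincomb (t : R) : 0 <= t ->
  h2 t = lincomb (rho * cosh_drive t - rho) 1 (rho * sinh_drive t).
Proof.
move=> t0; apply/funext => w.
have -> : h2 t w = (h2 t w - rho * h1 t w) + rho * h1 t w by ring.
by rewrite h2_sub_rho_h1 // (h1_lincomb t0) /lincomb; ring.
Qed.

Local Notation mu := (chi1_msq P chi1).

Lemma mu_gt0 : 0 < mu.
Proof. exact: chi1_msq_gt0 gaussP chi1_sqr_integrable. Qed.

Definition kernel11 t := mu * (expR (drive t) ^+ 2 + expR (- drive t) ^+ 2).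

Lemma K11_kernel (t : R) : 0 <= t ->
  Exp P (fun w => h1 t w * h1 t w) + Exp P (fun w => z t w ^+ 2) * 1 = kernel11 t.
Proof.
move=> t0; rewrite (h1_lincomb t0) (z_lincomb t0).
rewrite (Exp_lincombM rho01 gaussP chi1_sqr_integrable).
rewrite (Exp_lincomb_sqr rho01 gaussP chi1_sqr_integrable).
by rewrite /lincomb_cov /lincomb_var /kernel11 /cosh_drive /sinh_drive; field.
Qed.

Lemma K21_kernel (t : R) : 0 <= t ->
  Exp P (fun w => h2 t w * h1 t w) + Exp P (fun w => z t w ^+ 2) * rho =
  rho * kernel11 t.
Proof.
move=> t0; rewrite (h1_lincomb t0) (z_lincomb t0) (h2_lincomb t0).
rewrite (Exp_lincombM rho01 gaussP chi1_sqr_integrable).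
rewrite (Exp_lincomb_sqr rho01 gaussP chi1_sqr_integrable).
by rewrite /lincomb_cov /lincomb_var /kernel11 /cosh_drive /sinh_drive; field.
Qed.

Lemma is_derive_D1 (x : R) : 0 < x -> is_derive x 1 D1 (- (kernel11 x * D1 x)).
Proof. by move=> x0; have [+ _] := dmft_derive x0; rewrite K11_kernel ?ltW. Qed.

Lemma is_derive_D2 (x : R) : 0 < x -> is_derive x 1 D2 (- (rho * kernel11 x * D1 x)).
Proof. by move=> x0; have [_ +] := dmft_derive x0; rewrite K21_kernel ?ltW. Qed.

Lemma D2_affine_D1 (t : R) : 0 <= t -> D2 t = (1 - rho) * y + rho * D1 t.
Proof.
move=> t0; pose F s := D2 s - rho * D1 s.
have cF : cont_halfline F.
  by apply: cont_halflineB; [exact: cont_D2|apply: cont_halflineZ; exact: cont_D1].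
have F'0 (x : R) : 0 < x -> is_derive x 1 F 0.
  move=> x0; apply: is_derive_eq.
    by apply: is_deriveB; [exact: is_derive_D2|apply: is_deriveZ; exact: is_derive_D1].
  by rewrite /GRing.scale /=; ring.
have := derive0_cst_halfline t0 cF F'0; rewrite /F D1_at0 D2_at0 => eF.
by rewrite -[D2 t](subrK (rho * D1 t)) eF; ring.
Qed.

(* [(e^(2 drive) - e^(-2 drive))' = 2 g D1 (e^(2 drive) + e^(-2 drive))],
   which cancels [D1' = - kernel11 D1]. *)
Lemma D1_conservation (t : R) : 0 <= t ->
  D1 t + mu / (2 * g) * (expR (drive t) ^+ 2 - expR (- drive t) ^+ 2) = y.
Proof.
move=> t0; rewrite !expr2.
pose F s := D1 s + mu / (2 * g) *
  (expR (drive s) * expR (drive s) - expR (- drive s) * expR (- drive s)).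
have cF : cont_halfline F.
  apply: cont_halflineD; first exact: cont_D1.
  apply: cont_halflineZ; have cE := cont_halfline_expR cont_drive.
  have cEN := cont_halfline_expR (cont_halflineN cont_drive).
  by apply: cont_halflineB; apply: cont_halflineM.
have F'0 (x : R) : 0 < x -> is_derive x 1 F 0.
  move=> x0; have dE := is_derive_expR_comp (is_derive_drive x0).
  have dEN : is_derive x 1 (fun s => expR (- drive s)) (expR (- drive x) * - (g * D1 x)).
    exact/is_derive_expR_comp/is_deriveN/is_derive_drive.
  apply: is_derive_eq.
    by apply: is_deriveD; first exact: is_derive_D1.
  rewrite /kernel11 /GRing.scale /=; field.
  by rewrite lt0r_neq0.
have := derive0_cst_halfline t0 cF F'0.
by rewrite /F D1_at0 drive0 oppr0 expR0 subrr mulr0 addr0.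
Qed.

Lemma kernel11_gap (t : R) :
  kernel11 t - 2 * mu = mu * (expR (drive t) - expR (- drive t)) ^+ 2.
Proof.
have := expRxMexpNx_1 (drive t); rewrite /kernel11.
set p := expR (drive t); set q := expR (- drive t) => pq1.
have -> : 2 * mu = 2 * mu * (p * q) by rewrite pq1 mulr1.
by ring.
Qed.

Lemma kernel11_gap_ge0 (t : R) : 0 <= kernel11 t - 2 * mu.
Proof. by rewrite kernel11_gap mulr_ge0 ?sqr_ge0 // ltW // mu_gt0. Qed.

Definition scaledD1 t := D1 t * expR (2 * mu * t).

Lemma cont_scaledD1 : cont_halfline scaledD1.
Proof. by apply: cont_halflineM; [exact: cont_D1|exact: cont_halfline_expRZ]. Qed.

Lemma is_derive_scaledD1 (x : R) : 0 < x ->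
  is_derive x 1 scaledD1 (- ((kernel11 x - 2 * mu) * scaledD1 x)).
Proof.
move=> x0; have dE := is_derive_expR_comp (is_deriveZ (2 * mu) (@is_derive_id _ _ x 1)).
apply: is_derive_eq; first exact: is_deriveM (is_derive_D1 x0) dE.
by rewrite /scaledD1 /GRing.scale /=; ring.
Qed.

Lemma scaledD1_at0 : scaledD1 0 = y.
Proof. by rewrite /scaledD1 mulr0 expR0 mulr1 D1_at0. Qed.

(* Since [kernel11 >= 2 mu], the square of [scaledD1] is nonincreasing. *)
Lemma scaledD1_sqr_le (t : R) : 0 <= t -> scaledD1 t ^+ 2 <= y ^+ 2.
Proof.
move=> t0; pose dF c := - (2 * (kernel11 c - 2 * mu) * scaledD1 c ^+ 2).
have cF : cont_halfline (fun s => scaledD1 s * scaledD1 s).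
  by apply: cont_halflineM; exact: cont_scaledD1.
have dFP (x : R) : 0 < x -> is_derive x 1 (fun s => scaledD1 s * scaledD1 s) (dF x).
  move=> x0; have dS := is_derive_scaledD1 x0.
  by apply: is_derive_eq; rewrite // /dF /GRing.scale /=; ring.
have [c _] := MVT_halfline t0 cF dFP.
rewrite scaledD1_at0 -!expr2 => /eqP; rewrite subr_eq => /eqP ->.
rewrite gerDr /dF mulNr oppr_le0 mulr_ge0 // mulr_ge0 ?sqr_ge0 //.
by rewrite mulr_ge0 ?kernel11_gap_ge0.
Qed.

Lemma scaledD1_le (t : R) : 0 <= t -> `|scaledD1 t| <= `|y|.
Proof. by move=> t0; rewrite -ler_sqr ?nnegrE // !real_normK ?num_real // scaledD1_sqr_le. Qed.

Lemma D1_decay (t : R) : 0 <= t -> `|D1 t| <= `|y| * expR (- (2 * mu * t)).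
Proof.
move=> t0; have := scaledD1_le t0.
rewrite /scaledD1 normrM (ger0_norm (expR_ge0 _)) => le_y.
by rewrite expRN ler_pdivlMr ?expR_gt0.
Qed.

Lemma D1_le (t : R) : 0 <= t -> `|D1 t| <= `|y|.
Proof.
move=> t0; apply: le_trans (D1_decay t0) _; rewrite ler_piMr // expR_le1.
by rewrite oppr_le0 !mulr_ge0 // ltW // mu_gt0.
Qed.

Lemma kernel11_gap_le (t : R) : 0 <= t ->
  kernel11 t - 2 * mu <= 4 * g ^+ 2 * y ^+ 2 / mu.
Proof.
move=> t0; have mu0 := mu_gt0.
have := expRxMexpNx_1 (drive t); have := D1_conservation t0.
rewrite kernel11_gap; set p := expR (drive t); set q := expR (- drive t) => cons pq1.
have half_diff : (p ^+ 2 - q ^+ 2) / 2 = g * (y - D1 t) / mu.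
  by rewrite -cons; field; rewrite !lt0r_neq0.
(* [(p^2 - q^2)^2 / 4 = (p - q)^2 (p + q)^2 / 4] and [(p + q)^2 >= 4 p q = 4] *)
have diff_le : (p - q) ^+ 2 <= ((p ^+ 2 - q ^+ 2) / 2) ^+ 2.
  have -> : ((p ^+ 2 - q ^+ 2) / 2) ^+ 2 =
      (p - q) ^+ 2 * (1 + (p - q) ^+ 2 / 4 + (p * q - 1)) by field.
  by rewrite pq1 subrr addr0 ler_peMr ?sqr_ge0 // lerDl divr_ge0 ?sqr_ge0.
have dev_le : (y - D1 t) ^+ 2 <= 4 * y ^+ 2.
  have : D1 t ^+ 2 <= y ^+ 2.
    by rewrite -[D1 t ^+ 2]real_normK ?num_real // -[y ^+ 2]real_normK ?num_real
      // ler_sqr ?nnegrE // D1_le.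
  by have := sqr_ge0 (y + D1 t); nra.
apply: le_trans (ler_wpM2l (ltW mu0) diff_le) _.
rewrite half_diff -ler_pdivlMl //.
have -> : (g * (y - D1 t) / mu) ^+ 2 = g ^+ 2 * (y - D1 t) ^+ 2 / mu ^+ 2.
  by rewrite expr_div_n exprMn.
have -> : mu^-1 * (4 * g ^+ 2 * y ^+ 2 / mu) = g ^+ 2 * (4 * y ^+ 2) / mu ^+ 2.
  by field; rewrite lt0r_neq0.
by rewrite ler_wpM2r ?invr_ge0 ?sqr_ge0 // ler_wpM2l ?sqr_ge0.
Qed.

Lemma scaledD1_dev (t : R) : 0 <= t ->
  `|scaledD1 t - y| <= 4 * g ^+ 2 * `|y| ^+ 3 / mu * t.
Proof.
move=> t0; have [c c0] := MVT_halfline t0 cont_scaledD1 is_derive_scaledD1.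
rewrite scaledD1_at0 => ->; rewrite normrM (ger0_norm t0) ler_wpM2r //.
rewrite normrN normrM (ger0_norm (kernel11_gap_ge0 c)).
have -> : 4 * g ^+ 2 * `|y| ^+ 3 / mu = (4 * g ^+ 2 * y ^+ 2 / mu) * `|y|.
  by rewrite -[y ^+ 2]real_normK ?num_real //; ring.
by rewrite ler_pM ?kernel11_gap_ge0 ?kernel11_gap_le ?scaledD1_le.
Qed.

Lemma D1_approx (t : R) : 0 <= t ->
  `|D1 t - y * expR (- (2 * mu * t))| <=
  4 * g ^+ 2 * `|y| ^+ 3 / mu * t * expR (- (2 * mu * t)).
Proof.
move=> t0; have -> : D1 t - y * expR (- (2 * mu * t)) =
    (scaledD1 t - y) * expR (- (2 * mu * t)).
  by rewrite /scaledD1 mulrBl -(mulrA (D1 t)) -expRD subrr expR0 mulr1.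
by rewrite normrM (ger0_norm (expR_ge0 _)) ler_wpM2r ?expR_ge0 ?scaledD1_dev.
Qed.

End Dynamics.

Section Expansion.
Variables (R : realType) (d : measure_display) (T : measurableType d).
Variables (P : probability T R) (rho y : R) (chi1 chi2 xi : T -> R).
Variables (D1 D2 : R -> R -> R) (h1 h2 z : R -> R -> T -> R) (E0 E1 E2 : R -> R).
Hypothesis rho01 : 0 <= rho <= 1.
Hypothesis gaussP : init_gaussian P rho chi1 chi2 xi.
Hypothesis dmftP : forall g : R, 0 < g ->
  dmft_solution P rho y g chi1 chi2 xi (D1 g) (D2 g) (h1 g) (h2 g) (z g).
Hypothesis expansionP : forall t : R, 0 <= t ->
  bigO3_0 (fun g => D2 g t - (E0 t + g * E1 t + g ^+ 2 * E2 t)).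

Local Notation mu := (chi1_msq P chi1).

Lemma mu_pos : 0 < mu.
Proof. exact: mu_gt0 gaussP (dmftP ltr01). Qed.

(* [Delta_2^(0)]: the solution of the lazy ([gamma_0 = 0]) dynamics *)
Definition lazy_D2 t := (1 - rho) * y + rho * (y * expR (- (2 * mu * t))).

Definition E2_envelope t := rho * (4 * `|y| ^+ 3 / mu) * t * expR (- (2 * mu * t)).

Lemma D2_sub_lazy (g t : R) : 0 < g -> 0 <= t ->
  `|D2 g t - lazy_D2 t| <= g ^+ 2 * E2_envelope t.
Proof.
move=> g0 t0; have rho0 : 0 <= rho by case/andP: rho01.
rewrite (D2_affine_D1 rho01 gaussP (dmftP g0) t0) /lazy_D2.
have -> : (1 - rho) * y + rho * D1 g t - ((1 - rho) * y + rho * (y * expR (- (2 * mu * t))))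
    = rho * (D1 g t - y * expR (- (2 * mu * t))) by ring.
have -> : g ^+ 2 * E2_envelope t =
    rho * (4 * g ^+ 2 * `|y| ^+ 3 / mu * t * expR (- (2 * mu * t))).
  by rewrite /E2_envelope; ring.
rewrite normrM (ger0_norm rho0); apply: ler_wpM2l => //.
exact: (D1_approx rho01 gaussP g0 (dmftP g0) t0).
Qed.

Lemma expansion_coefs (t : R) : 0 <= t ->
  [/\ E0 t = lazy_D2 t, E1 t = 0 & `|E2 t| <= E2_envelope t].
Proof.
move=> t0; have [C [del [del0 bigO]]] := expansionP t0.
have [] := quadratic_coefs (a := lazy_D2 t - E0 t) (b := - E1 t) (c := - E2 t)
  (M := E2_envelope t) (C := C) del0.
  move=> g g0 gd; have le_rem : `|D2 g t - (E0 t + g * E1 t + g ^+ 2 * E2 t)| <= C * g ^+ 3.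
    by apply: bigO; rewrite g0 gd.
  have -> : lazy_D2 t - E0 t + g * - E1 t + g ^+ 2 * - E2 t =
      (lazy_D2 t - D2 g t) + (D2 g t - (E0 t + g * E1 t + g ^+ 2 * E2 t)) by ring.
  apply: le_trans (ler_normD _ _) _; rewrite distrC.
  exact: lerD (D2_sub_lazy g0 t0) le_rem.
move=> /subr0_eq <- /eqP; rewrite oppr_eq0 normrN => /eqP E1t0 E2t_le.
by split.
Qed.

Lemma cvg_lazy_D2 : lazy_D2 t @[t --> +oo] --> y * (1 - rho).
Proof.
have -> : y * (1 - rho) = (1 - rho) * y + rho * (y * 0) by ring.
apply: cvgD; first exact: cvg_cst.
apply: cvgM; first exact: cvg_cst.
apply: cvgM; first exact: cvg_cst.
by apply: cvg_expRN; rewrite mulr_gt0 ?mu_pos.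
Qed.

Lemma cvg_E2_envelope : E2_envelope t @[t --> +oo] --> (0 : R).
Proof. by apply: cvg_mul_t_expRN; rewrite mulr_gt0 ?mu_pos. Qed.

Lemma cvg_D2 (g : R) : 0 < g -> D2 g t @[t --> +oo] --> y * (1 - rho).
Proof.
move=> g0; apply: (eq_cvg_pinfty (D2_affine_D1 rho01 gaussP (dmftP g0))).
have -> : y * (1 - rho) = (1 - rho) * y + rho * 0 by ring.
apply: cvgD; first exact: cvg_cst.
apply: cvgM; first exact: cvg_cst.
apply: (cvg_pinfty_norm_le (D1_decay rho01 gaussP (dmftP g0))).
rewrite -(mulr0 `|y|); apply: cvgM; first exact: cvg_cst.
by apply: cvg_expRN; rewrite mulr_gt0 ?mu_pos.
Qed.

End Expansion.

Theorem mainTheorem4 (R : realType) (d : measure_display) (T : measurableType d)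
  (P : probability T R) (rho y : R) (chi1 chi2 xi : T -> R)
  (D1 D2 : R -> R -> R) (h1 h2 z : R -> R -> T -> R)
  (E0 E1 E2 : R -> R) :
  0 <= rho <= 1 ->
  init_gaussian P rho chi1 chi2 xi ->
  (forall g0 : R, 0 < g0 ->
     dmft_solution P rho y g0 chi1 chi2 xi (D1 g0) (D2 g0) (h1 g0) (h2 g0) (z g0)) ->
  (forall t : R, 0 <= t ->
     bigO3_0 (fun g0 => D2 g0 t - (E0 t + g0 * E1 t + g0 ^+ 2 * E2 t))) ->
  [/\ (forall t : R, 0 <= t -> E1 t = 0),
      (E0 t @[t --> +oo] --> y * (1 - rho)),
      (E2 t @[t --> +oo] --> 0) &
      exists L : R -> R,
        (forall g0 : R, 0 < g0 -> (D2 g0 t ^+ 2 / 2) @[t --> +oo] --> L g0) /\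
        bigO3_0 (fun g0 => L g0 - y ^+ 2 / 2 * (1 - rho) ^+ 2)].
Proof.
move=> rho01 gaussP dmftP expansionP.
have coefs (t : R) (t0 : 0 <= t) := expansion_coefs rho01 gaussP dmftP expansionP t0.
split.
- by move=> t /coefs[].
- apply: (eq_cvg_pinfty (G := lazy_D2 P rho y chi1)) => [t /coefs[]//|].
  exact: cvg_lazy_D2 gaussP dmftP.
- apply: (cvg_pinfty_norm_le (B := E2_envelope P rho y chi1)) => [t /coefs[]//|].
  exact: cvg_E2_envelope gaussP dmftP.
exists (fun=> y ^+ 2 / 2 * (1 - rho) ^+ 2); split; last first.
  by exists 0, 1; split => // g _; rewrite subrr normr0 mul0r.
move=> g g0; have D2lim := cvg_D2 rho01 gaussP dmftP g0.
have -> : y ^+ 2 / 2 * (1 - rho) ^+ 2 = y * (1 - rho) * (y * (1 - rho)) / 2 by ring.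
under eq_fun do rewrite expr2.
by apply: cvgM; [exact: cvgM|exact: cvg_cst].
Qed.
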